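(* Let $H$ be a Hopf algebra and $C$ a right $H$-Hopf-Galois co-object with cotranslation map $\tau$. Then $C$ is a Hopf heap with operation $\chi_{(C,H)}(a\otimes b\otimes c)=[a,b,c]=a\cdot\tau(b\otimes c)$, this Hopf heap has a Grunspan map, namely $\vartheta(c)=\sum c_{(1)}\cdot S\tau(c_{(3)}\otimes c_{(2)})$, and the map $\mathrm{Tn}^rC\to H$, $\tau_a^b\mapsto\tau(a\otimes b)$, is a well-defined isomorphism of Hopf algebras (with inverse $h\mapsto\tau_{e_{(1)}}^{e_{(2)}\cdot h}$ for any $e$ with $\varepsilon(e)=1$).
   Context: Work over a field $\mathbb{F}$; coalgebras coassociative, counital, nonzero, Sweedler notation; $C^{\mathrm{co}}$ co-opposite. For a Hopf algebra $H$ (antipode $S$), a right $H$-module coalgebra is a coalgebra $C$ with right action $c\cdot h$ satisfying $\Delta(c\cdot h)=\sum c_{(1)}\cdot h_{(1)}\otimes c_{(2)}\cdot h_{(2)}$, $\varepsilon(c\cdot h)=\varepsilon(c)\varepsilon(h)$; it is a right Hopf-Galois co-object if (a) $\ker\varepsilon=\mathrm{span}\{c\cdot h-c\varepsilon(h)\}$ and (b) $\mathrm{can}:C\otimes H\to C\otimes C$, $c\otimes h\mapsto\sum c_{(1)}\otimes c_{(2)}\cdot h$ is bijective. The cotranslation map is $\tau=(\varepsilon\otimes\mathrm{id})\circ\mathrm{can}^{-1}:C\otimes C\to H$. A Hopf heap is a coalgebra $C$ with a coalgebra map $\chi:C\otimes C^{\mathrm{co}}\otimes C\to C$, $a\otimes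 b\otimes c\mapsto[a,b,c]$, with $[[a,b,c],d,e]=[a,b,[c,d,e]]$ and $\sum[c_{(1)},c_{(2)},a]=\sum[a,c_{(1)},c_{(2)}]=\varepsilon(c)a$. A Grunspan map is a coalgebra map $\vartheta:C\to C$ with $[[a,b,\vartheta(c)],d,e]=[a,[d,c,b],e]$. $\mathrm{Tn}^rC$ is the span of $\tau_a^b:c\mapsto[c,a,b]$, a Hopf algebra with product $\tau_a^b\tau_c^d=\tau_c^d\circ\tau_a^b=\tau_a^{[b,c,d]}$, unit $\mathrm{id}$, $\Delta(\tau_a^b)=\sum\tau_{a_{(2)}}^{b_{(1)}}\otimes\tau_{a_{(1)}}^{b_{(2)}}$, $\varepsilon(\tau_a^b)=\varepsilon(a)\varepsilon(b)$. *)

(* Tensor products of (possibly infinite-dimensional)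
   F-vector spaces are not in the library; we represent an element of
   U (x) V by a finite formal sum of pure tensors, i.e. a  seq (U * V)
   (scalars are absorbed in the first factor), and two such formal sums are
   equal in U (x) V iff every bilinear map out of U x V agrees on them
   (universal property of the tensor product).  Likewise for U (x) V (x) W. *)
From HB Require Import structures.
From mathcomp Require Import all_boot all_order all_algebra.
Set Implicit Arguments. Unset Strict Implicit. Unset Printing Implicit Defensive.
Import GRing.Theory.
Local Open Scope ring_scope.

Section Tensors.
Variable F : fieldType.

Definition lin_map (U W : lmodType F) (f : U -> W) : Prop :=
  forall (a : F) (x y : U), f (a *: x + y) = a *: f x + f y.

Definition lin_form (U : lmodType F) (f : U -> F) : Prop :=
  forall (a : F) (x y : U), f (a *: x + y) = a * f x + f y.

Definition bilin_map (U V W : lmodType F) (f : U -> V -> W) : Prop :=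
  (forall z : V, lin_map (fun x => f x z)) /\ (forall x : U, lin_map (f x)).

Definition trilin_map (U V X W : lmodType F) (f : U -> V -> X -> W) : Prop :=
  [/\ (forall y z, lin_map (fun x => f x y z)),
      (forall x z, lin_map (fun y => f x y z)) &
      (forall x y, lin_map (f x y))].

Definition teq2 (U V : lmodType F) (t t' : seq (U * V)) : Prop :=
  forall (W : lmodType F) (f : U -> V -> W), bilin_map f ->
    \sum_(p <- t) f p.1 p.2 = \sum_(p <- t') f p.1 p.2.

Definition teq3 (U V X : lmodType F) (t t' : seq (U * V * X)) : Prop :=
  forall (W : lmodType F) (f : U -> V -> X -> W), trilin_map f ->
    \sum_(p <- t) f p.1.1 p.1.2 p.2 = \sum_(p <- t') f p.1.1 p.1.2 p.2.

(* (V, D, e) is a coalgebra: D (x) = sum_{p in D x} p.1 (x) p.2 (Sweedler) *)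
Definition is_coalgebra (V : lmodType F) (D : V -> seq (V * V)) (e : V -> F)
  : Prop :=
  [/\ lin_form e,
      (forall a x y, teq2 (D (a *: x + y))
                         ([seq (a *: p.1, p.2) | p <- D x] ++ D y)),
      (forall x, teq3 [seq (p.1, q.1, q.2) | p <- D x, q <- D p.2]
                      [seq (q.1, q.2, p.2) | p <- D x, q <- D p.1]),
      (forall x, \sum_(p <- D x) e p.1 *: p.2 = x) &
      (forall x, \sum_(p <- D x) e p.2 *: p.1 = x)].

Definition is_hopf_algebra (H : algType F) (D : H -> seq (H * H)) (e : H -> F)
  (S : H -> H) : Prop :=
  [/\ is_coalgebra D e,
      teq2 (D 1) [:: (1, 1)],
      (forall h k, teq2 (D (h * k))
                        [seq (p.1 * q.1, p.2 * q.2) | p <- D h, q <- D k]),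
      e 1 = 1 /\ (forall h k, e (h * k) = e h * e k) &
      lin_map S /\
      (forall h, \sum_(p <- D h) S p.1 * p.2 = e h *: 1 /\
                 \sum_(p <- D h) p.1 * S p.2 = e h *: 1)].

Section Galois.
Variables (H : algType F) (DH : H -> seq (H * H)) (eH : H -> F).
Variables (C : lmodType F) (DC : C -> seq (C * C)) (eC : C -> F).
Variable act : C -> H -> C.

Definition is_module_coalgebra : Prop :=
  [/\ bilin_map act,
      (forall c, act c 1 = c),
      (forall c h k, act (act c h) k = act c (h * k)),
      (forall c h, teq2 (DC (act c h))
           [seq (act p.1 q.1, act p.2 q.2) | p <- DC c, q <- DH h]) &
      (forall c h, eC (act c h) = eC c * eH h)].

Definition can_map (t : seq (C * H)) : seq (C * C) :=
  [seq (q.1, act q.2 p.2) | p <- t, q <- DC p.1].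

Definition is_hopf_galois_coobject : Prop :=
  [/\ is_module_coalgebra,
      (forall x : C, eC x = 0 <->
         exists s : seq (C * H), x = \sum_(p <- s) (act p.1 p.2 - eH p.2 *: p.1)),
      (forall t t', teq2 (can_map t) (can_map t') -> teq2 t t') &
      (forall u, exists t, teq2 (can_map t) u)].

(* tau = (eps (x) id) o can^{-1}, given by its values tau b c = tau(b (x) c) *)
Definition is_cotranslation (tau : C -> C -> H) : Prop :=
  forall (b c : C) (t : seq (C * H)), teq2 (can_map t) [:: (b, c)] ->
    tau b c = \sum_(p <- t) eC p.1 *: p.2.

Definition heap_op (tau : C -> C -> H) (a b c : C) : C := act a (tau b c).

Definition grunspan_of (S : H -> H) (tau : C -> C -> H) (c : C) : C :=
  \sum_(p <- DC c) \sum_(q <- DC p.2) act p.1 (S (tau q.2 q.1)).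

End Galois.

Section Heap.
Variables (C : lmodType F) (DC : C -> seq (C * C)) (eC : C -> F).

(* chi : C (x) C^co (x) C -> C is a coalgebra map *)
Definition is_coalgebra_map3 (chi : C -> C -> C -> C) : Prop :=
  [/\ trilin_map chi,
      (forall a b c, teq2 (DC (chi a b c))
         (flatten [seq [seq (chi p.1 q.2 r.1, chi p.2 q.1 r.2)
                         | q <- DC b, r <- DC c] | p <- DC a])) &
      (forall a b c, eC (chi a b c) = eC a * eC b * eC c)].

Definition is_hopf_heap (chi : C -> C -> C -> C) : Prop :=
  [/\ is_coalgebra_map3 chi,
      (forall a b c d e, chi (chi a b c) d e = chi a b (chi c d e)),
      (forall a c, \sum_(p <- DC c) chi p.1 p.2 a = eC c *: a) &
      (forall a c, \sum_(p <- DC c) chi a p.1 p.2 = eC c *: a)].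

Definition is_coalgebra_map1 (th : C -> C) : Prop :=
  [/\ lin_map th,
      (forall c, teq2 (DC (th c)) [seq (th p.1, th p.2) | p <- DC c]) &
      (forall c, eC (th c) = eC c)].

Definition is_grunspan_map (chi : C -> C -> C -> C) (th : C -> C) : Prop :=
  is_coalgebra_map1 th /\
  (forall a b c d e, chi (chi a b (th c)) d e = chi a (chi d c b) e).

Definition tn_gen (chi : C -> C -> C -> C) (a b : C) : C -> C :=
  fun c => chi c a b.

Definition in_Tn (chi : C -> C -> C -> C) (f : C -> C) : Prop :=
  exists s : seq (F * C * C),
    f = (fun c => \sum_(p <- s) p.1.1 *: chi c p.1.2 p.2).

End Heap.
End Tensors.

(* Every property of tau is obtained by one device: an
   element t of C (x) H is determined by can t (injectivity of can), so tau(b (x) c)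
   is computed from any preimage of b (x) c, and identities between preimages are
   checked after applying can, using coassociativity, the counit laws and the
   module-coalgebra axioms.  The theorem then follows:
   the heap axioms for [a, b, c] = a . tau(b (x) c) and the Grunspan identity are
   tau identities, and Tn^r C consists exactly of the translations c |-> c . h,
   on which Phi f = tau(e1 (x) f e2) (any e with eps e = 1) inverts h |-> (. h). *)

From HB Require Import structures.
From Stdlib Require Import FunctionalExtensionality.
From mathcomp Require Import all_boot all_order all_algebra.
Set Implicit Arguments. Unset Strict Implicit. Unset Printing Implicit Defensive.
Import GRing.Theory.
Local Open Scope ring_scope.

Section LinearMaps.
Variable F : fieldType.

Section Laws.
Variables (U W : lmodType F) (f : U -> W).
Hypothesis hf : lin_map f.

Lemma lin0 : f 0 = 0.
Proof.
have := hf 1 0 0; rewrite !scale1r addr0 => /(congr1 (fun z => z - f 0)).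
by rewrite subrr addrK => <-.
Qed.

Lemma linZ a x : f (a *: x) = a *: f x.
Proof. by have := hf a x 0; rewrite addr0 lin0 addr0. Qed.

Lemma linD x y : f (x + y) = f x + f y.
Proof. by have := hf 1 x y; rewrite !scale1r. Qed.

Lemma linsum I (s : seq I) (G : I -> U) :
  f (\sum_(i <- s) G i) = \sum_(i <- s) f (G i).
Proof.
elim: s => [|i s IH]; first by rewrite !big_nil lin0.
by rewrite !big_cons linD IH.
Qed.

End Laws.

Lemma lin_formP (U : lmodType F) (e : U -> F) : lin_form e -> lin_map (e : U -> F^o).
Proof. by []. Qed.

Lemma linfZ (U : lmodType F) (e : U -> F) (he : lin_form e) a x :
  e (a *: x) = a * e x.
Proof. exact (linZ (lin_formP he) a x). Qed.

Lemma linfsum (U : lmodType F) (e : U -> F) (he : lin_form e) I (s : seq I)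
  (G : I -> U) : e (\sum_(i <- s) G i) = \sum_(i <- s) e (G i).
Proof. exact (linsum (lin_formP he) s G). Qed.

Lemma lin_id (U : lmodType F) : lin_map (fun x : U => x).
Proof. by []. Qed.

Lemma lin_sum (U W : lmodType F) I (s : seq I) (G : U -> I -> W) :
  (forall i, lin_map (fun x => G x i)) -> lin_map (fun x => \sum_(i <- s) G x i).
Proof.
move=> hG a x y; rewrite scaler_sumr -big_split /=.
by apply: eq_bigr => i _; rewrite hG.
Qed.

Lemma lin_bilinl (U1 U2 V W : lmodType F) (f : U1 -> U2 -> W) (g : V -> U1) z :
  bilin_map f -> lin_map g -> lin_map (fun x => f (g x) z).
Proof. by move=> [h1 _] hg a x y /=; rewrite hg h1. Qed.

Lemma lin_bilinr (U1 U2 V W : lmodType F) (f : U1 -> U2 -> W) (g : V -> U2) z :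
  bilin_map f -> lin_map g -> lin_map (fun x => f z (g x)).
Proof. by move=> [_ h2] hg a x y /=; rewrite hg h2. Qed.

Lemma lin_comp (U1 V W : lmodType F) (h : U1 -> W) (g : V -> U1) :
  lin_map h -> lin_map g -> lin_map (fun x => h (g x)).
Proof. by move=> hh hg a x y /=; rewrite hg hh. Qed.

Lemma lin_formZ (U1 V W : lmodType F) (e : U1 -> F) (g : V -> U1) (v : W) :
  lin_form e -> lin_map g -> lin_map (fun x => e (g x) *: v).
Proof. by move=> he hg a x y /=; rewrite hg he scalerDl scalerA. Qed.

Lemma lin_scale (V W : lmodType F) (g : V -> W) (k : F) :
  lin_map g -> lin_map (fun x => k *: g x).
Proof. by move=> hg a x y /=; rewrite hg scalerDr !scalerA mulrC. Qed.

Lemma bilin_mul (A : algType F) : bilin_map (@GRing.mul A).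
Proof.
split=> [z|x] a u v /=; first by rewrite mulrDl scalerAl.
by rewrite mulrDr scalerAr.
Qed.

End LinearMaps.

Section Coalgebra.
Variables (F : fieldType) (V : lmodType F) (D : V -> seq (V * V)) (e : V -> F).
Hypothesis hD : is_coalgebra D e.

Lemma sweedler_lin (W : lmodType F) (G : V * V -> W) :
  bilin_map (fun u v => G (u, v)) -> lin_map (fun x => \sum_(p <- D x) G p).
Proof.
case: hD => _ hl _ _ _ [h1 h2] a x y /=.
have E z : \sum_(p <- D z) G p = \sum_(p <- D z) G (p.1, p.2).
  by apply: eq_bigr => -[].
have := hl a x y W (fun u v => G (u, v)) (conj h1 h2).
rewrite /= !E => ->; rewrite big_cat big_map /= scaler_sumr; congr (_ + _).
by apply: eq_bigr => p _; rewrite (linZ (h1 p.2)).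
Qed.

Lemma lin_sweedler (W U : lmodType F) (G : V * V -> W) (g : U -> V) :
  bilin_map (fun u v => G (u, v)) -> lin_map g ->
  lin_map (fun x => \sum_(p <- D (g x)) G p).
Proof. by move=> hG hg; apply: (lin_comp (sweedler_lin hG)). Qed.

Lemma sweedler_sum (W : lmodType F) (G : V * V -> W) I (s : seq I) (X : I -> V) :
  bilin_map (fun u v => G (u, v)) ->
  \sum_(p <- D (\sum_(i <- s) X i)) G p = \sum_(i <- s) \sum_(p <- D (X i)) G p.
Proof. by move=> hG; rewrite (linsum (sweedler_lin hG)). Qed.

Lemma sweedlerZ (W : lmodType F) (G : V * V -> W) a x :
  bilin_map (fun u v => G (u, v)) ->
  \sum_(p <- D (a *: x)) G p = a *: \sum_(p <- D x) G p.
Proof. by move=> hG; rewrite (linZ (sweedler_lin hG)). Qed.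

Lemma coassoc (W : lmodType F) (g : V -> V -> V -> W) x :
  trilin_map g ->
  \sum_(p <- D x) \sum_(q <- D p.2) g p.1 q.1 q.2 =
  \sum_(p <- D x) \sum_(q <- D p.1) g q.1 q.2 p.2.
Proof.
case: hD => _ _ ha _ _ hg; have := ha x W g hg.
by rewrite !big_allpairs_dep.
Qed.

Lemma counitl (W : lmodType F) (g : V -> W) x :
  lin_map g -> \sum_(p <- D x) e p.1 *: g p.2 = g x.
Proof.
case: hD => _ _ _ h _ hg; rewrite -{2}(h x) (linsum hg).
by apply: eq_bigr => p _; rewrite (linZ hg).
Qed.

Lemma counitr (W : lmodType F) (g : V -> W) x :
  lin_map g -> \sum_(p <- D x) e p.2 *: g p.1 = g x.
Proof.
case: hD => _ _ _ _ h hg; rewrite -{2}(h x) (linsum hg).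
by apply: eq_bigr => p _; rewrite (linZ hg).
Qed.

Lemma counitlf (g : V -> F) (hg : lin_form g) x : \sum_(p <- D x) e p.1 * g p.2 = g x.
Proof. exact: (counitl (W := F^o)) (lin_formP hg). Qed.

Lemma counitrf (g : V -> F) (hg : lin_form g) x : \sum_(p <- D x) e p.2 * g p.1 = g x.
Proof. exact: (counitr (W := F^o)) (lin_formP hg). Qed.

Lemma exists_counit1 : (exists c : V, c != 0) -> exists x, e x = 1.
Proof.
case=> c nzc; case: hD => he _ _ hcu _.
have [/hasP [p _ ep]|/hasPn ep0] := boolP (has (fun p => e p.1 != 0) (D c)).
  by exists ((e p.1)^-1 *: p.1); rewrite (linfZ he) mulVf.
case/negP: nzc; rewrite -(hcu c) big1_seq // => p /andP [_ /ep0].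
by rewrite negbK => /eqP ->; rewrite scale0r.
Qed.

End Coalgebra.

(* [lin] proves linearity of expressions built from sums, Sweedler sums,
   compositions and the maps registered in the hint database [linear];
   [bilin] and [trilin] do the same in each argument. *)
Create HintDb linear.

Ltac lin_atom := solve [eauto with linear].

Ltac lin :=
  cbv beta;
  first
  [ exact: lin_id
  | apply: lin_sum => ?; lin
  | apply: lin_sweedler; [lin_atom | bilin | lin]
  | apply: lin_bilinl; [solve [exact: bilin_mul | lin_atom] | lin]
  | apply: lin_bilinr; [solve [exact: bilin_mul | lin_atom] | lin]
  | apply: lin_formZ; [lin_atom | lin]
  | apply: lin_scale; lin
  | apply: lin_comp; [lin_atom | lin] ]
with bilin := simpl; split => [?|?]; simpl; lin.

Ltac trilin := simpl; split => [? ?|? ?|? ?]; simpl; lin.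

Section HopfAlgebra.
Variables (F : fieldType) (H : algType F) (DH : H -> seq (H * H)) (eH : H -> F)
  (S : H -> H).
Hypothesis hH : is_hopf_algebra DH eH S.

Lemma hopf_coalgebra : is_coalgebra DH eH. Proof. by case: hH. Qed.
Lemma hopf_counit_lin : lin_form eH. Proof. by case: hopf_coalgebra. Qed.
Lemma antipode_lin : lin_map S. Proof. by case: hH => _ _ _ _ []. Qed.
Lemma hopf_counit1 : eH 1 = 1. Proof. by case: hH => _ _ _ []. Qed.
Lemma hopf_counitM h k : eH (h * k) = eH h * eH k.
Proof. by case: hH => _ _ _ [_ ->]. Qed.

Lemma antipodel h : \sum_(p <- DH h) S p.1 * p.2 = eH h *: 1.
Proof. by case: hH => _ _ _ _ [_ /(_ h) []]. Qed.
Lemma antipoder h : \sum_(p <- DH h) p.1 * S p.2 = eH h *: 1.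
Proof. by case: hH => _ _ _ _ [_ /(_ h) []]. Qed.

Lemma comult1 (W : lmodType F) (G : H * H -> W) :
  bilin_map (fun u v => G (u, v)) -> \sum_(p <- DH 1) G p = G (1, 1).
Proof.
case: hH => _ h1 _ _ _ hg; have := h1 W _ hg; rewrite big_cons big_nil addr0 /= => <-.
by apply: eq_bigr => -[].
Qed.

Lemma comultM (W : lmodType F) (G : H * H -> W) h k :
  bilin_map (fun u v => G (u, v)) ->
  \sum_(p <- DH (h * k)) G p = \sum_(p <- DH h) \sum_(q <- DH k) G (p.1 * q.1, p.2 * q.2).
Proof.
case: hH => _ _ hm _ _ hg; have := hm h k W _ hg; rewrite big_allpairs_dep /= => <-.
by apply: eq_bigr => -[].
Qed.

#[local] Hint Resolve hopf_coalgebra hopf_counit_lin antipode_lin : linear.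

Lemma counit_antipode h : eH (S h) = eH h.
Proof.
have := congr1 eH (antipodel h).
rewrite (linfsum hopf_counit_lin) (linfZ hopf_counit_lin) hopf_counit1 mulr1 => <-.
under eq_bigr => p _ do rewrite hopf_counitM mulrC.
have hES : lin_form (fun z => eH (S z)).
  by move=> a u v; rewrite antipode_lin hopf_counit_lin.
by rewrite (counitrf hopf_coalgebra hES).
Qed.

Lemma antipode_nested (W : lmodType F) (g : H -> H -> W) k : bilin_map g ->
  \sum_(q <- DH k) \sum_(s <- DH q.2) \sum_(v <- DH q.1) g (v.1 * S s.2) (v.2 * S s.1)
  = eH k *: g 1 1.
Proof.
move=> hg.
under eq_bigr => q _ do rewrite exchange_big /=.
rewrite -(coassoc hopf_coalgebra
  (g := fun a b c => \sum_(s <- DH c) g (a * S s.2) (b * S s.1))) /=; last by trilin.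
under eq_bigr => q _.
  rewrite (coassoc hopf_coalgebra (g := fun a b c => g (q.1 * S c) (a * S b))); last by trilin.
  under eq_bigr => v _.
    rewrite -(linsum (f := fun z => g (q.1 * S v.2) z)) /=; last by lin.
    rewrite antipoder (linZ (proj2 hg _)).
    over.
  rewrite /= (counitl hopf_coalgebra (g := fun z => g (q.1 * S z) 1)); last by lin.
  over.
rewrite /= -(linsum (f := fun z => g z 1)) /=; last by lin.
by rewrite antipoder (linZ (proj1 hg _)).
Qed.

(* Delta S(h) = Delta S(h1) . (h2 S h5 (x) h3 S h4), inserting antipode_nested
   into the counit law h = eps(h2) h1. *)
Lemma comult_antipode_expand (W : lmodType F) (f : H -> H -> W) h :
  bilin_map f ->
  \sum_(u <- DH (S h)) f u.1 u.2 =
  \sum_(p <- DH h) \sum_(q <- DH p.2) \sum_(s <- DH q.2) \sum_(v <- DH q.1)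
   \sum_(u <- DH (S p.1)) f (u.1 * (v.1 * S s.2)) (u.2 * (v.2 * S s.1)).
Proof.
move=> hf.
rewrite -{1}(counitr hopf_coalgebra (g := fun z => \sum_(u <- DH (S z)) f u.1 u.2) h) /=;
  last by lin.
apply: eq_bigr => p _.
have := @antipode_nested W (fun X Y => \sum_(u <- DH (S p.1)) f (u.1 * X) (u.2 * Y)) p.2.
move=> /= ->; last by bilin.
by congr (_ *: _); apply: eq_bigr => u _; rewrite !mulr1.
Qed.

(* Delta (S h) = S h2 (x) S h1: in the expansion above, Delta (S h1) (h2 (x) h3) is
   Delta (S h1 h2) (h3 (x) h4) by multiplicativity, and S h1 h2 = eps(h1) 1. *)
Lemma comult_antipode h : teq2 (DH (S h)) [seq (S p.2, S p.1) | p <- DH h].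
Proof.
move=> W f hf; rewrite big_map /= comult_antipode_expand //.
under [LHS]eq_bigr => p _.
  under eq_bigr => q _.
    under eq_bigr => s _.
      rewrite exchange_big /=.
      under eq_bigr => u _ do under eq_bigr => v _ do rewrite !mulrA.
      rewrite -(comultM (G := fun w => f (w.1 * S s.2) (w.2 * S s.1))) /=; last by bilin.
      over.
    over.
  over.
rewrite /= (coassoc hopf_coalgebra (g := fun a b c => \sum_(s <- DH c)
   \sum_(w <- DH (S a * b)) f (w.1 * S s.2) (w.2 * S s.1))) /=; last by trilin.
under [LHS]eq_bigr => p _.
  rewrite exchange_big /=.
  under eq_bigr => s _.
    rewrite -(sweedler_sum hopf_coalgebra (G := fun w => f (w.1 * S s.2) (w.2 * S s.1))) /=;
      last by bilin.
    rewrite antipodel (sweedlerZ hopf_coalgebra (G := fun w => f (w.1 * S s.2) (w.2 * S s.1)))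
      /=; last by bilin.
    rewrite (comult1 (G := fun w => f (w.1 * S s.2) (w.2 * S s.1))) /= ?mul1r; last by bilin.
    over.
  rewrite /= -scaler_sumr.
  over.
by rewrite /= (counitl hopf_coalgebra (g := fun z => \sum_(s <- DH z) f (S s.2) (S s.1)));
  last by lin.
Qed.

End HopfAlgebra.

Section Cotranslation.
Variables (F : fieldType) (H : algType F) (DH : H -> seq (H * H)) (eH : H -> F)
  (S : H -> H) (C : lmodType F) (DC : C -> seq (C * C)) (eC : C -> F)
  (act : C -> H -> C) (tau : C -> C -> H).
Hypotheses (hH : is_hopf_algebra DH eH S) (hC : is_coalgebra DC eC)
  (hG : is_hopf_galois_coobject DH eH DC eC act)
  (htau : is_cotranslation DC eC act tau).

Lemma act_bilin : bilin_map act. Proof. by case: hG => -[]. Qed.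
Lemma counitC_lin : lin_form eC. Proof. by case: hC. Qed.
Lemma act1 c : act c 1 = c. Proof. by case: hG => -[]. Qed.
Lemma actM c h k : act (act c h) k = act c (h * k). Proof. by case: hG => -[]. Qed.
Lemma counit_act c h : eC (act c h) = eC c * eH h. Proof. by case: hG => -[]. Qed.

Lemma comult_act (W : lmodType F) (G : C * C -> W) c h :
  bilin_map (fun u v => G (u, v)) ->
  \sum_(p <- DC (act c h)) G p =
  \sum_(p <- DC c) \sum_(q <- DH h) G (act p.1 q.1, act p.2 q.2).
Proof.
case: hG => -[_ _ _ hD _] _ _ _ hg; have := hD c h _ _ hg.
rewrite big_allpairs_dep /= => <-; by apply: eq_bigr => -[].
Qed.

#[local] Hint Resolve act_bilin counitC_lin hopf_coalgebra hopf_counit_lin antipode_lin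
  : linear.

Definition can_preimage (t : seq (C * H)) (b c : C) : Prop :=
  forall (W : lmodType F) (f : C -> C -> W), bilin_map f ->
    \sum_(p <- t) \sum_(q <- DC p.1) f q.1 (act q.2 p.2) = f b c.

Definition counit_id (t : seq (C * H)) : H := \sum_(p <- t) eC p.1 *: p.2.

Lemma sum_can_map (W : lmodType F) (f : C -> C -> W) t :
  \sum_(u <- can_map DC act t) f u.1 u.2 =
  \sum_(p <- t) \sum_(q <- DC p.1) f q.1 (act q.2 p.2).
Proof. by rewrite big_allpairs_dep. Qed.

Lemma can_preimage_exists b c : exists t, can_preimage t b c.
Proof.
case: hG => _ _ _ /(_ [:: (b, c)]) [t ht]; exists t => W f hf.
by rewrite -sum_can_map ht // big_cons big_nil addr0.
Qed.

Lemma tau_can b c t : can_preimage t b c -> tau b c = counit_id t.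
Proof.
by move=> h; apply: htau => W f hf; rewrite sum_can_map h // big_cons big_nil addr0.
Qed.

Lemma tau_comb a b c b1 c1 b2 c2 :
  (forall (W : lmodType F) (f : C -> C -> W), bilin_map f ->
     f b c = a *: f b1 c1 + f b2 c2) ->
  tau b c = a *: tau b1 c1 + tau b2 c2.
Proof.
move=> hbc; have [t1 h1] := can_preimage_exists b1 c1.
have [t2 h2] := can_preimage_exists b2 c2.
rewrite (tau_can h1) (tau_can h2) (@tau_can _ _ ([seq (p.1, a *: p.2) | p <- t1] ++ t2)).
  rewrite /counit_id big_cat big_map /= scaler_sumr; congr (_ + _).
  by apply: eq_bigr => p _; rewrite scalerA mulrC -scalerA.
move=> W f hf; rewrite big_cat big_map /= h2 // hbc // -(h1 _ _ hf) scaler_sumr.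
congr (_ + _); apply: eq_bigr => p _; rewrite scaler_sumr; apply: eq_bigr => q _.
by rewrite (linZ (proj2 act_bilin _)) (linZ (proj2 hf _)).
Qed.

Lemma tau_bilin : bilin_map tau.
Proof.
split=> [c|b] a x y; apply: tau_comb => W f [hf1 hf2]; [exact: hf1 | exact: hf2].
Qed.

#[local] Hint Resolve tau_bilin : linear.

Lemma tau_can_sum (u : seq (C * C)) t :
  (forall (W : lmodType F) (f : C -> C -> W), bilin_map f ->
     \sum_(p <- t) \sum_(q <- DC p.1) f q.1 (act q.2 p.2) = \sum_(p <- u) f p.1 p.2) ->
  \sum_(p <- u) tau p.1 p.2 = counit_id t.
Proof.
move=> ht.
have [T [hT ET]] : exists T, (forall (W : lmodType F) (f : C -> C -> W), bilin_map f ->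
     \sum_(p <- T) \sum_(q <- DC p.1) f q.1 (act q.2 p.2) = \sum_(p <- u) f p.1 p.2)
   /\ counit_id T = \sum_(p <- u) tau p.1 p.2.
  elim: u {ht} => [|[b c] u [T [hT ET]]].
    by exists [::]; split=> [W f hf|]; rewrite /counit_id !big_nil.
  have [t0 h0] := can_preimage_exists b c.
  exists (t0 ++ T); split=> [W f hf|].
    by rewrite big_cat big_cons /= h0 // hT.
  by rewrite big_cons -ET (tau_can h0) /counit_id big_cat.
rewrite -ET /counit_id; case: hG => _ _ hinj _.
have := hinj T t; rewrite /teq2 => /(_ _ H (fun x h => eC x *: h)) /= -> //.
- by move=> W f hf; rewrite !sum_can_map hT // ht.
- by bilin.
Qed.

Lemma tau_can_counit c h : \sum_(p <- DC c) tau p.1 (act p.2 h) = eC c *: h.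
Proof.
have -> : \sum_(p <- DC c) tau p.1 (act p.2 h) =
   \sum_(p <- [seq (q.1, act q.2 h) | q <- DC c]) tau p.1 p.2 by rewrite big_map.
rewrite (@tau_can_sum _ [:: (c, h)]); first by rewrite /counit_id big_cons big_nil addr0.
by move=> W f hf; rewrite big_cons big_nil addr0 big_map.
Qed.

Lemma tau_comult c : \sum_(p <- DC c) tau p.1 p.2 = eC c *: 1.
Proof. by rewrite -tau_can_counit; apply: eq_bigr => p _; rewrite act1. Qed.

Lemma tau_actr b c h : tau b (act c h) = tau b c * h.
Proof.
have [t ht] := can_preimage_exists b c.
rewrite (tau_can ht) (@tau_can _ _ [seq (p.1, p.2 * h) | p <- t]).
  by rewrite /counit_id big_map mulr_suml; apply: eq_bigr => p _; rewrite scalerAl.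
move=> W f hf; rewrite big_map /=.
have := ht W (fun x y => f x (act y h)) => /= <-; last by bilin.
by apply: eq_bigr => p _; apply: eq_bigr => q _; rewrite actM.
Qed.

(* can o can^-1 = id, after acting: b1 . tau(b2 (x) c) = eps(b) c *)
Lemma act_tau_counit b c : \sum_(p <- DC b) act p.1 (tau p.2 c) = eC b *: c.
Proof.
have [t ht] := can_preimage_exists b c.
have hg : bilin_map (fun x y => \sum_(p <- DC x) act p.1 (tau p.2 y)) by bilin.
rewrite -(ht _ _ hg) /=.
have hE : bilin_map (fun (x : C) (y : C) => eC x *: y) by bilin.
rewrite -(ht _ _ hE) /=; apply: eq_bigr => i _.
rewrite -(coassoc hC (g := fun u v w => act u (tau v (act w i.2)))); last by trilin.
under [LHS]eq_bigr => q _.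
  rewrite -(linsum (proj2 act_bilin q.1)) tau_can_counit (linZ (proj2 act_bilin _)).
  over.
rewrite (counitr hC (g := fun z => act z i.2)); last by lin.
by rewrite (counitl hC (g := fun z => act z i.2)); last by lin.
Qed.

Lemma counit_tau a b : eH (tau a b) = eC a * eC b.
Proof.
have [t ht] := can_preimage_exists a b.
have hf : bilin_map (fun x y => (eC x * eC y : F^o)).
  split=> [z|x] k u v /=; rewrite counitC_lin /=; first by rewrite mulrDl -mulrA.
  by rewrite mulrDr mulrCA.
rewrite (tau_can ht) /counit_id (linfsum (hopf_counit_lin hH)) -(ht _ _ hf) /=.
apply: eq_bigr => i _; rewrite (linfZ (hopf_counit_lin hH)).
under eq_bigr => q _ do rewrite counit_act mulrA.
by rewrite -mulr_suml (counitlf hC counitC_lin).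
Qed.

(* The computation behind tau_actl: for t = sum x_i (x) h_i in C (x) H, the
   element  sum x_i . h1 (x) S h2 h_i  has image (. h (x) id)(can t) under can. *)
Lemma can_act_antipode h (W : lmodType F) (f : C -> C -> W) (t : seq (C * H)) :
  bilin_map f ->
  \sum_(i <- t) \sum_(k <- DH h)
      \sum_(q <- DC (act i.1 k.1)) f q.1 (act q.2 (S k.2 * i.2)) =
  \sum_(i <- t) \sum_(r <- DC i.1) f (act r.1 h) (act r.2 i.2).
Proof.
move=> hf; apply: eq_bigr => i _.
under [LHS]eq_bigr => k _.
  rewrite (comult_act (G := fun q => f q.1 (act q.2 (S k.2 * i.2)))) /=; last by bilin.
  under eq_bigr => r _ do under eq_bigr => m _ do rewrite actM.
  over.
rewrite /= exchange_big /=; apply: eq_bigr => r _.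
rewrite -(coassoc (hopf_coalgebra hH)
  (g := fun a b c => f (act r.1 a) (act r.2 (b * (S c * i.2))))); last by trilin.
under eq_bigr => k _.
  rewrite -(linsum (f := fun z => f (act r.1 k.1) (act r.2 z))) /=; last by lin.
  under eq_bigr => m _ do rewrite mulrA.
  rewrite -mulr_suml (antipoder hH) -scalerAl mul1r.
  rewrite (linZ (proj2 act_bilin _)) (linZ (proj2 hf _)).
  over.
by rewrite /= (counitr (hopf_coalgebra hH) (g := fun z => f (act r.1 z) (act r.2 i.2)));
  last by lin.
Qed.

Lemma tau_actl x h y : tau (act x h) y = S h * tau x y.
Proof.
have [t ht] := can_preimage_exists x y.
rewrite (tau_can ht) (@tau_can _ _ [seq (act i.1 k.1, S k.2 * i.2) | i <- t, k <- DH h]).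
  rewrite /counit_id big_allpairs_dep /= mulr_sumr; apply: eq_bigr => i _.
  under eq_bigr => k _ do rewrite counit_act -scalerA.
  rewrite -scaler_sumr (counitl (hopf_coalgebra hH) (g := fun z => S z * i.2)); last by lin.
  by rewrite scalerAr.
move=> W f hf; rewrite big_allpairs_dep /= can_act_antipode //.
by rewrite (ht W (fun u v => f (act u h) v)) //; bilin.
Qed.

(* tau is a coalgebra map C^co (x) C -> H:
   Delta tau(a (x) b) = tau(a2 (x) b1) (x) tau(a1 (x) b2). *)
Lemma comult_tau a b : teq2 (DH (tau a b))
  [seq (tau p.2 q.1, tau p.1 q.2) | p <- DC a, q <- DC b].
Proof.
move=> W f hf; rewrite big_allpairs_dep /=.
have [t ht] := can_preimage_exists a b.
rewrite (tau_can ht) /counit_id.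
rewrite (sweedler_sum (hopf_coalgebra hH) (G := fun p => f p.1 p.2)); last by bilin.
have hR : bilin_map (fun x y => \sum_(p <- DC x) \sum_(q <- DC y)
   f (tau p.2 q.1) (tau p.1 q.2)) by bilin.
rewrite -(ht _ _ hR) /=; apply: eq_bigr => i _.
rewrite (sweedlerZ (hopf_coalgebra hH) (G := fun p => f p.1 p.2)); last by bilin.
under [RHS]eq_bigr => r _.
  under eq_bigr => p _.
    rewrite (comult_act (G := fun q => f (tau p.2 q.1) (tau p.1 q.2))); last by bilin.
    under eq_bigr => s _ do under eq_bigr => k _ do rewrite !tau_actr.
    rewrite exchange_big /=.
    over.
  rewrite exchange_big /=.
  over.
rewrite exchange_big /= scaler_sumr; apply: eq_bigr => k _; symmetry.
rewrite -(coassoc hC (g := fun u v w => \sum_(s <- DC w)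
   f (tau v s.1 * k.1) (tau u s.2 * k.2))) /=; last by trilin.
under eq_bigr => r _.
  rewrite (coassoc hC (g := fun u v w => f (tau u v * k.1) (tau r.1 w * k.2))); last by trilin.
  under eq_bigr => q _.
    rewrite -(linsum (f := fun z => f (z * k.1) (tau r.1 q.2 * k.2))) /=; last by lin.
    rewrite tau_comult -scalerAl mul1r (linZ (proj1 hf _)).
    over.
  rewrite /= (counitl hC (g := fun z => f k.1 (tau r.1 z * k.2))); last by lin.
  over.
rewrite /= -(linsum (f := fun z => f k.1 (z * k.2))) /=; last by lin.
by rewrite tau_comult -scalerAl mul1r (linZ (proj2 hf _)).
Qed.

(* The two convolution identities S * id = eps = id * S, transported along tau. *)
Lemma antipode_tau_convl y x :
  \sum_(p <- DC y) \sum_(q <- DC x) S (tau p.2 q.1) * tau p.1 q.2 = (eC y * eC x) *: 1.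
Proof.
have hf : bilin_map (fun u v : H => S u * v) by bilin.
have := comult_tau y x hf; rewrite big_allpairs_dep /= => <-.
by rewrite (antipodel hH) counit_tau.
Qed.

Lemma antipode_tau_convr y x :
  \sum_(p <- DC y) \sum_(q <- DC x) tau p.2 q.1 * S (tau p.1 q.2) = (eC y * eC x) *: 1.
Proof.
have hf : bilin_map (fun u v : H => u * S v) by bilin.
have := comult_tau y x hf; rewrite big_allpairs_dep /= => <-.
by rewrite (antipoder hH) counit_tau.
Qed.

Lemma tau_contract a x z : \sum_(s <- DC x) tau a s.1 * tau s.2 z = eC x *: tau a z.
Proof.
under eq_bigr => s _ do rewrite -tau_actr.
by rewrite -(linsum (proj2 tau_bilin a)) act_tau_counit (linZ (proj2 tau_bilin a)).
Qed.

Definition theta := grunspan_of DC act S tau.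

Lemma theta_lin : lin_map theta.
Proof. by rewrite /theta /grunspan_of; lin. Qed.

#[local] Hint Resolve theta_lin : linear.

Lemma tau_theta y : \sum_(r <- DC y) tau r.2 (theta r.1) = eC y *: 1.
Proof.
rewrite /theta /grunspan_of.
under eq_bigr => r _.
  rewrite (linsum (proj2 tau_bilin r.2)) /=.
  under eq_bigr => p _.
    rewrite (linsum (proj2 tau_bilin r.2)) /=.
    under eq_bigr => q _ do rewrite tau_actr.
    over.
  rewrite (coassoc hC (g := fun a b c => tau r.2 a * S (tau c b))); last by trilin.
  over.
rewrite /= -(coassoc hC (g := fun a b c => \sum_(q <- DC a) tau c q.1 * S (tau b q.2)))
  /=; last by trilin.
under eq_bigr => r _ do rewrite antipode_tau_convr.
by rewrite -scaler_suml (counitrf hC counitC_lin).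
Qed.

Lemma tau_contract_theta y x :
  \sum_(r <- DC y) \sum_(s <- DC x) tau r.2 s.1 * tau s.2 (theta r.1) = (eC y * eC x) *: 1.
Proof.
under eq_bigr => r _ do rewrite tau_contract.
by rewrite -scaler_sumr tau_theta scalerA mulrC.
Qed.

Lemma antipode_tau y x : S (tau y x) = tau x (theta y).
Proof.
transitivity (\sum_(p <- DC y) \sum_(q <- DC x)
    S (tau p.2 q.1) * ((eC p.1 * eC q.2) *: 1)).
  rewrite -{1}(counitl hC (g := fun z => S (tau z x)) y) /=; last by lin.
  apply: eq_bigr => p _.
  rewrite -{1}(counitr hC (g := fun z => S (tau p.2 z)) x) /=; last by lin.
  rewrite scaler_sumr; apply: eq_bigr => q _.
  by rewrite -scalerAr mulr1 scalerA.
under eq_bigr => p _ do under eq_bigr => q _ do rewrite -tau_contract_theta mulr_sumr.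
under eq_bigr => p _ do under eq_bigr => q _ do under eq_bigr => r _ do rewrite mulr_sumr.
under eq_bigr => p _ do rewrite exchange_big /=.
rewrite -(coassoc hC (g := fun a b c => \sum_(q <- DC x) \sum_(s <- DC q.2)
   S (tau c q.1) * (tau b s.1 * tau s.2 (theta a)))) /=; last by trilin.
under eq_bigr => p _.
  under eq_bigr => r _.
    rewrite (coassoc hC (g := fun a b c => S (tau r.2 a) * (tau r.1 b * tau c (theta p.1))));
      last by trilin.
    over.
  rewrite /= exchange_big /=.
  under eq_bigr => q _.
    under eq_bigr => r _ do under eq_bigr => s _ do rewrite mulrA.
    under eq_bigr => r _ do rewrite -mulr_suml.
    rewrite -mulr_suml antipode_tau_convl -scalerAl mul1r -scalerA.
    over.
  rewrite /= -scaler_sumr (counitl hC (g := fun z => tau z (theta p.1))); last by lin.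
  over.
by rewrite /= (counitr hC (g := fun z => tau x (theta z))); last by lin.
Qed.

(* theta is counital, since eps o S = eps and tau is counital. *)
Lemma counit_theta c : eC (theta c) = eC c.
Proof.
rewrite /theta /grunspan_of (linfsum counitC_lin).
under eq_bigr => p _.
  rewrite (linfsum counitC_lin).
  under eq_bigr => q _ do rewrite counit_act (counit_antipode hH) counit_tau.
  rewrite -mulr_sumr (counitrf hC counitC_lin).
  over.
by rewrite /= (counitlf hC counitC_lin).
Qed.

Lemma comult_act_antipode_tau (W : lmodType F) (f : C -> C -> W) x y z :
  bilin_map f ->
  \sum_(u <- DC (act x (S (tau y z)))) f u.1 u.2 =
  \sum_(r <- DC x) \sum_(a <- DC y) \sum_(b <- DC z)
     f (act r.1 (S (tau a.1 b.2))) (act r.2 (tau b.1 (theta a.2))).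
Proof.
move=> hf; rewrite (comult_act (G := fun u => f u.1 u.2)) /=; last by bilin.
apply: eq_bigr => r _.
have hb : bilin_map (fun X Y => f (act r.1 X) (act r.2 Y)) by bilin.
have := comult_antipode hH (tau y z) hb => /= ->; rewrite big_map /=.
have hb2 : bilin_map (fun X Y => f (act r.1 (S Y)) (act r.2 (S X))) by bilin.
have := comult_tau y z hb2 => /= ->; rewrite big_allpairs_dep /=.
by under eq_bigr => a _ do under eq_bigr => b _ do rewrite [X in act r.2 X]antipode_tau.
Qed.

Lemma comult_theta c : teq2 (DC (theta c)) [seq (theta p.1, theta p.2) | p <- DC c].
Proof.
move=> W f hf; rewrite big_map /= {1}/theta /grunspan_of.
rewrite (sweedler_sum hC (G := fun u => f u.1 u.2)) /=; last by bilin.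
under eq_bigr => p _.
  rewrite (sweedler_sum hC (G := fun u => f u.1 u.2)) /=; last by bilin.
  under eq_bigr => q _ do rewrite comult_act_antipode_tau // exchange_big /=.
  rewrite /= (coassoc hC (g := fun al be ga => \sum_(r <- DC p.1) \sum_(b <- DC al)
     f (act r.1 (S (tau be b.2))) (act r.2 (tau b.1 (theta ga))))) /=; last by trilin.
  over.
rewrite /= (coassoc hC (g := fun al be ga => \sum_(a <- DC be) \sum_(r <- DC al)
  \sum_(b <- DC a.1) f (act r.1 (S (tau a.2 b.2))) (act r.2 (tau b.1 (theta ga)))))
  /=; last by trilin.
under [LHS]eq_bigr => p _.
  under eq_bigr => q _ do rewrite exchange_big /=.
  rewrite -(coassoc hC (g := fun al be ga => \sum_(a <- DC ga) \sum_(b <- DC a.1)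
     f (act al (S (tau a.2 b.2))) (act be (tau b.1 (theta p.2))))) /=; last by trilin.
  under eq_bigr => q _.
    rewrite (coassoc hC (g := fun al be ga => \sum_(b <- DC be)
      f (act q.1 (S (tau ga b.2))) (act al (tau b.1 (theta p.2))))) /=; last by trilin.
    under eq_bigr => r _.
      rewrite (coassoc hC (g := fun al be ga =>
        f (act q.1 (S (tau r.2 ga))) (act al (tau be (theta p.2))))) /=; last by trilin.
      under eq_bigr => a _.
        rewrite -(linsum (f := fun z => f (act q.1 (S (tau r.2 a.2))) z)) /=; last by lin.
        rewrite act_tau_counit (linZ (proj2 hf _)).
        over.
      rewrite /= (counitl hC (g := fun z => f (act q.1 (S (tau r.2 z))) (theta p.2))) /=;
        last by lin.
      over.
    rewrite /= -(linsum (f := fun z => f z (theta p.2))) /=; last by lin.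
    over.
  rewrite /= -(linsum (f := fun z => f z (theta p.2))) /=; last by lin.
  over.
by [].
Qed.

Lemma comult_heap a b c : teq2 (DC (heap_op act tau a b c))
  (flatten [seq [seq (heap_op act tau p.1 q.2 r.1, heap_op act tau p.2 q.1 r.2)
                 | q <- DC b, r <- DC c] | p <- DC a]).
Proof.
move=> W f hf.
have sum_flatten (s : seq (seq (C * C))) :
    \sum_(i <- flatten s) f i.1 i.2 = \sum_(l <- s) \sum_(i <- l) f i.1 i.2.
  by elim: s => [|l s IH]; rewrite ?big_nil // /= big_cat big_cons IH.
rewrite sum_flatten big_map /heap_op.
rewrite (comult_act (G := fun u => f u.1 u.2)) /=; last by bilin.
rewrite exchange_big /=.
have hb : bilin_map (fun X Y => \sum_(p <- DC a) f (act p.1 X) (act p.2 Y)) by bilin.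
have := comult_tau b c hb => /= ->; rewrite big_allpairs_dep /=.
symmetry; under eq_bigr => p _ do rewrite big_allpairs_dep.
by rewrite exchange_big /=; apply: eq_bigr => q _; rewrite exchange_big.
Qed.

Lemma heap_op_hopf_heap : is_hopf_heap DC eC (heap_op act tau).
Proof.
rewrite /heap_op; split.
- split; [by trilin | exact: comult_heap |].
  by move=> a b c; rewrite counit_act counit_tau mulrA.
- by move=> a b c d e; rewrite actM tau_actr.
- by move=> a c; rewrite act_tau_counit.
- move=> a c; rewrite -(linsum (proj2 act_bilin a)) tau_comult.
  by rewrite (linZ (proj2 act_bilin _)) act1.
Qed.

Lemma grunspan_heap : is_grunspan_map DC eC (heap_op act tau) theta.
Proof.
split; first by split; [exact: theta_lin | exact: comult_theta | exact: counit_theta].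
by move=> a b c d e; rewrite /heap_op actM tau_actl -antipode_tau.
Qed.

Lemma in_Tn_act f : in_Tn (heap_op act tau) f -> exists h, f = fun c => act c h.
Proof.
case=> s ->; exists (\sum_(p <- s) p.1.1 *: tau p.1.2 p.2).
apply: functional_extensionality => c; rewrite /heap_op (linsum (proj2 act_bilin c)).
by apply: eq_bigr => p _; rewrite (linZ (proj2 act_bilin c)).
Qed.

Lemma heap_translation e h : eC e = 1 ->
  (fun c => \sum_(p <- DC e) heap_op act tau c p.1 (act p.2 h)) = fun c => act c h.
Proof.
move=> he; apply: functional_extensionality => c.
by rewrite /heap_op -(linsum (proj2 act_bilin c)) tau_can_counit he scale1r.
Qed.

Section Translations.
Variable e : C.
Hypothesis he : eC e = 1.

Definition Phi (f : C -> C) : H := \sum_(p <- DC e) tau p.1 (f p.2).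

Lemma Phi_act h : Phi (fun c => act c h) = h.
Proof. by rewrite /Phi tau_can_counit he scale1r. Qed.

Lemma act_in_Tn h : in_Tn (heap_op act tau) (fun c => act c h).
Proof.
exists [seq (1, p.1, act p.2 h) | p <- DC e]; rewrite -(heap_translation h he).
by apply: functional_extensionality => c; rewrite big_map; under eq_bigr do rewrite scale1r.
Qed.

(* By in_Tn_act, all properties of Phi on Tn^r C reduce to Phi_act. *)
Lemma Phi_linear (k : F) f g : in_Tn (heap_op act tau) f -> in_Tn (heap_op act tau) g ->
  Phi (fun c => k *: f c + g c) = k *: Phi f + Phi g.
Proof.
move=> /in_Tn_act [X ->] /in_Tn_act [Y ->]; rewrite !Phi_act -[RHS]Phi_act.
by congr Phi; apply: functional_extensionality => c; rewrite (proj2 act_bilin c).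
Qed.

Lemma Phi_inj f g : in_Tn (heap_op act tau) f -> in_Tn (heap_op act tau) g ->
  Phi f = Phi g -> f = g.
Proof. by move=> /in_Tn_act [X ->] /in_Tn_act [Y ->]; rewrite !Phi_act => ->. Qed.

Lemma Phi_surj h : exists f, in_Tn (heap_op act tau) f /\ Phi f = h.
Proof. by exists (fun c => act c h); rewrite Phi_act; split; first exact: act_in_Tn. Qed.

(* The product of Tn^r C is reversed composition. *)
Lemma Phi_mul f g : in_Tn (heap_op act tau) f -> in_Tn (heap_op act tau) g ->
  Phi (fun c => g (f c)) = Phi f * Phi g.
Proof.
move=> /in_Tn_act [X ->] /in_Tn_act [Y ->]; rewrite !Phi_act -[RHS]Phi_act.
by congr Phi; apply: functional_extensionality => c; rewrite actM.
Qed.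

Lemma Phi_id : in_Tn (heap_op act tau) id /\ Phi id = 1.
Proof.
have -> : id = (fun c => act c 1) by apply: functional_extensionality => c; rewrite act1.
by rewrite Phi_act; split; first exact: act_in_Tn.
Qed.

Lemma Phi_inverse e' : eC e' = 1 ->
  (forall h, Phi (fun c => \sum_(p <- DC e') heap_op act tau c p.1 (act p.2 h)) = h) /\
  (forall f, in_Tn (heap_op act tau) f ->
     (fun c => \sum_(p <- DC e') heap_op act tau c p.1 (act p.2 (Phi f))) = f).
Proof.
move=> he'; split=> [h|f /in_Tn_act [X ->]]; rewrite heap_translation //.
  exact: Phi_act.
by rewrite Phi_act.
Qed.

End Translations.

End Cotranslation.

Unset Implicit Arguments.

Theorem mainTheorem9 (F : fieldType) (H : algType F)
  (DH : H -> seq (H * H)) (eH : H -> F) (S : H -> H)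
  (C : lmodType F) (DC : C -> seq (C * C)) (eC : C -> F)
  (act : C -> H -> C) (tau : C -> C -> H) :
  is_hopf_algebra DH eH S ->
  is_coalgebra DC eC ->
  (exists c : C, c != 0) ->
  is_hopf_galois_coobject DH eH DC eC act ->
  is_cotranslation DC eC act tau ->
  let chi := heap_op act tau in
  [/\ is_hopf_heap DC eC chi,
      is_grunspan_map DC eC chi (grunspan_of DC act S tau) &
      exists Phi : (C -> C) -> H,
        [/\ (forall a b, Phi (tn_gen chi a b) = tau a b) /\
            (forall (k : F) f g, in_Tn chi f -> in_Tn chi g ->
               Phi (fun c => k *: f c + g c) = k *: Phi f + Phi g),
            (forall f g, in_Tn chi f -> in_Tn chi g -> Phi f = Phi g -> f = g) /\
            (forall h, exists f, in_Tn chi f /\ Phi f = h),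
            (* algebra map: product in Tn^r C is  f g = g o f , unit id *)
            (forall f g, in_Tn chi f -> in_Tn chi g ->
               Phi (fun c => g (f c)) = Phi f * Phi g) /\
            (in_Tn chi id /\ Phi id = 1),
            (* coalgebra map, on the generators tau_a^b *)
            (forall a b, teq2 (DH (tau a b))
               [seq (tau p.2 q.1, tau p.1 q.2) | p <- DC a, q <- DC b]) /\
            (forall a b, eH (tau a b) = eC a * eC b) &
            (* inverse  h |-> tau_{e1}^{e2 . h}  for any e with eps(e) = 1 *)
            (forall e, eC e = 1 ->
               (forall h, Phi (fun c => \sum_(p <- DC e) chi c p.1 (act p.2 h)) = h) /\
               (forall f, in_Tn chi f ->
                  (fun c => \sum_(p <- DC e) chi c p.1 (act p.2 (Phi f))) = f))]].
Proof.
move=> hH hC /(exists_counit1 hC) [e he] hG htau chi.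
split; [eapply heap_op_hopf_heap; eassumption | eapply grunspan_heap; eassumption |].
exists (Phi DC tau e); split.
- by split; [move=> a b; eapply Phi_act | eapply Phi_linear]; eassumption.
- by split; [eapply Phi_inj | eapply Phi_surj]; eassumption.
- by split; [eapply Phi_mul | eapply Phi_id]; eassumption.
- by split=> a b; [eapply comult_tau | eapply counit_tau]; eassumption.
- by eapply Phi_inverse; eassumption.
Qed.
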